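(* Let $\mathcal V$ be a congruence modular variety, $\mathbb A\in\mathcal V$, $n\ge 2$, $R$ an $(n)$-dimensional tolerance of $\mathbb A$ and $\delta\in\mathrm{Con}(\mathbb A)$. If $R$ has $(\delta,j)$-centrality for some $j\in n$, then $R$ has $(\delta,i)$-centrality for every $i\in n$.
   Context: Cube notation. $n=\{0,\dots,n-1\}$, $2=\{0,1\}$; $2^n$ is the set of functions $n\to2$, $\mathbf 1$ the constant function $1$. An $(n)$-cube over $A$ is $\gamma=(\gamma_f)_{f\in 2^n}\in A^{2^n}$. For $i\in n$, $j\in 2$, $\mathrm{face}_i^j(\gamma)$ is $g\mapsto\gamma_{g\cup\{(i,j)\}}$ ($g\in 2^{n\setminus\{i\}}$); $\mathrm{glue}_{\{i\}}(\zeta,\eta)$ is the unique cube with $\mathrm{face}_i^0=\zeta$, $\mathrm{face}_i^1=\eta$; $\mathrm{refl}_i^j(\gamma)=\mathrm{glue}_{\{i\}}(\mathrm{face}_i^j\gamma,\mathrm{face}_i^j\gamma)$ and $\mathrm{sym}_i(\gamma)=\mathrm{glue}_{\{i\}}(\mathrm{face}_i^1\gamma,\mathrm{face}_i^0\gamma)$. A subuniverse $R$ of $\mathbb A^{2^n}$ is an $(n)$-dimensional tolerance of $\mathbb A$ if $\mathrm{refl}_i^j(\gamma),\mathrm{sym}_i(\gamma)\in R$ for all $\gamma\in R$, $i\in n$, $j\in 2$. For $i\in n$ and $f\in 2^{n\setminus\{i\}}$ the $(i)$-cross-section line of $\gamma$ at $f$ is $(\gamma_{f\cup\{(i,0)\}},\gamma_{f\cup\{(i,1)\}})$;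 for $f=\mathbf 1$ it is the $(i)$-pivot line, for $f\neq \mathbf 1$ an $(i)$-supporting line. $R$ has $(\delta,i)$-centrality if for every $\gamma\in R$ all of whose $(i)$-supporting lines lie in $\delta$, the $(i)$-pivot line of $\gamma$ lies in $\delta$. *)

From mathcomp Require Import all_boot.
Set Implicit Arguments. Unset Strict Implicit. Unset Printing Implicit Defensive.

Record signature := Signature { sym :> Type; arity : sym -> nat }.

Record algebra (S : signature) := Algebra {
  carrier :> Type;
  op : forall f : S, ('I_(arity f) -> carrier) -> carrier }.
Arguments op {S a} f _.

Inductive term (S : signature) : Type :=
| Var of nat
| App (f : S) of ('I_(arity f) -> term S).

Fixpoint eval (S : signature) (B : algebra S) (v : nat -> B) (t : term S) : B :=
  match t with
  | Var x => v x
  | App f a => @op S B f (fun k => eval v (a k))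
  end.

Definition models (S : signature) (Sigma : term S -> term S -> Prop) (B : algebra S) : Prop :=
  forall s t, Sigma s t -> forall v : nat -> B, eval v s = eval v t.

Definition is_congruence (S : signature) (B : algebra S) (th : B -> B -> Prop) : Prop :=
  [/\ (forall x, th x x), (forall x y, th x y -> th y x),
      (forall x y z, th x y -> th y z -> th x z) &
      (forall (f : S) (a b : 'I_(arity f) -> B),
          (forall k, th (a k) (b k)) -> th (op f a) (op f b))].

Definition con_le (B : Type) (a b : B -> B -> Prop) := forall x y, a x y -> b x y.
Definition con_meet (B : Type) (a b : B -> B -> Prop) := fun x y => a x y /\ b x y.
Definition con_join (S : signature) (B : algebra S) (a b : B -> B -> Prop) :=
  fun x y => forall th, is_congruence th -> con_le a th -> con_le b th -> th x y.

Definition con_modular (S : signature) (B : algebra S) : Prop :=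
  forall a b c : B -> B -> Prop,
    is_congruence a -> is_congruence b -> is_congruence c -> con_le a c ->
    forall x y, con_join a (con_meet b c) x y <-> con_meet (con_join a b) c x y.

Definition cube (A : Type) (n : nat) := {ffun 'I_n -> bool} -> A.

(* f with coordinate i set to b, i.e. g \cup {(i,b)} for g the restriction of f. *)
Definition upd (n : nat) (f : {ffun 'I_n -> bool}) (i : 'I_n) (b : bool) : {ffun 'I_n -> bool} :=
  [ffun k => if k == i then b else f k].

Definition one_fn (n : nat) : {ffun 'I_n -> bool} := [ffun => true].

(* refl_i^j(gamma) = glue_i(face_i^j gamma, face_i^j gamma) *)
Definition refl (A : Type) (n : nat) (i : 'I_n) (j : bool) (g : cube A n) : cube A n :=
  fun f => g (upd f i j).
(* sym_i(gamma) = glue_i(face_i^1 gamma, face_i^0 gamma) *)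
Definition symc (A : Type) (n : nat) (i : 'I_n) (g : cube A n) : cube A n :=
  fun f => g (upd f i (~~ f i)).

Definition cube_subuniverse (S : signature) (A : algebra S) (n : nat) (R : cube A n -> Prop) :=
  forall (f : S) (args : 'I_(arity f) -> cube A n),
    (forall k, R (args k)) -> R (fun c => op f (fun k => args k c)).

Definition tolerance (S : signature) (A : algebra S) (n : nat) (R : cube A n -> Prop) : Prop :=
  cube_subuniverse R /\
  forall g, R g -> forall (i : 'I_n), (forall j : bool, R (refl i j g)) /\ R (symc i g).

(* (delta,i)-centrality. The cross-section at f in 2^(n\{i}) is encoded by any
   f in 2^n (its i-th value is irrelevant); f restricted to n\{i} differs from 1
   iff f k = false for some k <> i. *)
Definition centrality (S : signature) (A : algebra S) (n : nat) (R : cube A n -> Prop)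
    (delta : A -> A -> Prop) (i : 'I_n) : Prop :=
  forall g, R g ->
    (forall f : {ffun 'I_n -> bool}, (exists k, k != i /\ f k = false) ->
        delta (g (upd f i false)) (g (upd f i true))) ->
    delta (g (upd (one_fn n) i false)) (g (upd (one_fn n) i true)).

From mathcomp Require Import all_boot.
From Stdlib Require Import ClassicalEpsilon FunctionalExtensionality ProofIrrelevance PropExtensionality.
Set Implicit Arguments. Unset Strict Implicit. Unset Printing Implicit Defensive.

(* The engine is a shifting principle (lemma [day_shift]): for a congruence
   delta of A and elements y x u v with u delta x, if every Day-type term t
   (t(a,b,b,a) = a in the variety) satisfies t(y,x,u,v) delta t(y,y,v,v), then
   y delta v.  It is proved in the free algebra F of the variety on countably
   many generators x0, x1, ...: with the kernels alpha, beta, gamma of the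
   substitutions (x0,x0,x3,x3), (x0,x1,x1,x0), (x0,x1,x1,x3), modularity of
   Con(F) and gamma <= beta put (x0,x3) in gamma \/ (alpha /\ beta), i.e. they
   are linked by a chain of gamma- and (alpha /\ beta)-steps through Day terms;
   evaluating the chain at (y,y,v,v) yields y delta v.

   To pass from (i)- to (j)-centrality, a cube g whose (j)-supporting lines lie
   in delta is combined with its reflections through a Day term t; the
   resulting cube lies in R, its (i)-supporting lines are in delta, so its
   (i)-pivot line t(y,x,u,v) -- t(y,y,v,v) is in delta, and [day_shift]
   gives the (j)-pivot line of g. *)

Section Congruences.
Variables (S : signature) (B : algebra S) (th : B -> B -> Prop).
Hypothesis Hth : is_congruence th.

Lemma cong_refl x : th x x.
Proof. by case: Hth. Qed.

Lemma cong_sym x y : th x y -> th y x.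
Proof. by case: Hth => _ h _ _; apply: h. Qed.

Lemma cong_trans x y z : th x y -> th y z -> th x z.
Proof. by case: Hth => _ _ h _; apply: h. Qed.

Lemma eval_cong (v w : nat -> B) t :
  (forall m, th (v m) (w m)) -> th (eval v t) (eval w t).
Proof.
move=> H; elim: t => [m|f a IH] /=; first exact: H.
by case: Hth => _ _ _ hc; apply: hc.
Qed.

End Congruences.

Lemma meet_congruence (S : signature) (B : algebra S) (r1 r2 : B -> B -> Prop) :
  is_congruence r1 -> is_congruence r2 -> is_congruence (con_meet r1 r2).
Proof.
case=> a1 b1 c1 d1 [a2 b2 c2 d2]; split.
- by move=> x; split.
- by move=> x y [h1 h2]; split; [apply: b1|apply: b2].
- by move=> x y z [h1 h2] [h3 h4]; split; [apply: c1 h3|apply: c2 h4].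
- by move=> f a b H; split; [apply: d1 => k; case: (H k) | apply: d2 => k; case: (H k)].
Qed.

Lemma compat_of_single (S : signature) (B : algebra S) (th : B -> B -> Prop) :
  (forall x, th x x) -> (forall x y z, th x y -> th y z -> th x z) ->
  (forall f (c : 'I_(arity f) -> B) k x y, th x y ->
     th (op f (fun l => if l == k then x else c l))
        (op f (fun l => if l == k then y else c l))) ->
  forall f (a b : 'I_(arity f) -> B),
    (forall k, th (a k) (b k)) -> th (op f a) (op f b).
Proof.
move=> Hrefl Htrans Hsingle f a b Hab.
pose mix l := fun k : 'I_(arity f) => if (k < l)%N then b k else a k.
have mix0 : mix 0 = a by apply: functional_extensionality => k; rewrite /mix ltn0.
have mix_end : mix (arity f) = b.
  by apply: functional_extensionality => k; rewrite /mix ltn_ord.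
suff mixP : forall l, (l <= arity f)%N -> th (op f a) (op f (mix l)).
  by rewrite -mix_end; apply: mixP.
elim=> [|l IH] Hl; first by rewrite mix0.
pose K := Ordinal Hl.
apply: Htrans (IH (ltnW Hl)) _.
have E1 : mix l = (fun k => if k == K then a K else mix l k).
  by apply: functional_extensionality => k; case: eqP => // ->; rewrite /mix ltnn.
have E2 : mix l.+1 = (fun k => if k == K then b K else mix l k).
  apply: functional_extensionality => k; rewrite /mix; case: eqP => [->|ne].
    by rewrite ltnSn.
  rewrite ltnS leq_eqVlt; have -> // : (nat_of_ord k == l) = false.
  by apply/eqP => e; apply: ne; apply: val_inj.
by rewrite E2 {1}E1; apply: Hsingle.
Qed.

(* The join of two congruences is the relation of chains of steps in either. *)
Inductive union_chain (T : Type) (r1 r2 : T -> T -> Prop) : T -> T -> Prop :=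
| chain_left x y : r1 x y -> union_chain r1 r2 x y
| chain_right x y : r2 x y -> union_chain r1 r2 x y
| chain_trans x y z : union_chain r1 r2 x y -> union_chain r1 r2 y z ->
    union_chain r1 r2 x z.

Lemma union_chain_sub (T : Type) (r1 r2 th : T -> T -> Prop) :
  (forall x y z, th x y -> th y z -> th x z) ->
  con_le r1 th -> con_le r2 th -> con_le (union_chain r1 r2) th.
Proof.
move=> Htrans H1 H2 x y; elim=> {x y} [x y|x y|x y z _ IH1 _ IH2];
  [exact: H1|exact: H2|exact: Htrans IH1 IH2].
Qed.

Section Join.
Variables (S : signature) (B : algebra S) (r1 r2 : B -> B -> Prop).
Hypotheses (H1 : is_congruence r1) (H2 : is_congruence r2).

Lemma union_chain_congruence : is_congruence (union_chain r1 r2).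
Proof.
have refl x : union_chain r1 r2 x x by apply: chain_left; apply: cong_refl.
split => //.
- move=> x y; elim=> {x y} [x y h|x y h|x y z _ IH1 _ IH2].
  + by apply: chain_left; apply: cong_sym.
  + by apply: chain_right; apply: cong_sym.
  + exact: chain_trans IH2 IH1.
- by move=> x y z; apply: chain_trans.
apply: compat_of_single => //; first exact: chain_trans.
move=> f c k x y; elim=> {x y} [x y h|x y h|x y z _ IH1 _ IH2].
- apply: chain_left; case: H1 => _ _ _ hc; apply: hc => l.
  by case: (l == k) => //; apply: cong_refl.
- apply: chain_right; case: H2 => _ _ _ hc; apply: hc => l.
  by case: (l == k) => //; apply: cong_refl.
- exact: chain_trans IH1 IH2.
Qed.

Lemma join_union_chain x y : con_join r1 r2 x y -> union_chain r1 r2 x y.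
Proof.
move=> H; apply: H; first exact: union_chain_congruence.
- by move=> u v; apply: chain_left.
- by move=> u v; apply: chain_right.
Qed.

End Join.

(* The free algebra of the variety defined by Sigma, built from terms modulo
   the identities valid in all models, with canonical representatives. *)
Section FreeAlgebra.
Variables (S : signature) (Sigma : term S -> term S -> Prop).

Fixpoint subst (sg : nat -> term S) (t : term S) : term S :=
  match t with
  | Var x => sg x
  | App f a => App (fun k => subst sg (a k))
  end.

Lemma eval_subst (B : algebra S) (v : nat -> B) sg t :
  eval v (subst sg t) = eval (fun m => eval v (sg m)) t.
Proof.
elim: t => [m|f a IH] //=; congr (op f _).
by apply: functional_extensionality => k; apply: IH.
Qed.

Lemma eval_ext (B : algebra S) (v w : nat -> B) t : v =1 w -> eval v t = eval w t.
Proof. by move=> H; rewrite (functional_extensionality v w H). Qed.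

Definition teq (s t : term S) := forall B : algebra S, models Sigma B ->
  forall w : nat -> B, eval w s = eval w t.

Lemma teq_refl t : teq t t. Proof. by []. Qed.
Lemma teq_sym s t : teq s t -> teq t s. Proof. by move=> H B HB w; rewrite H. Qed.
Lemma teq_trans s t u : teq s t -> teq t u -> teq s u.
Proof. by move=> H1 H2 B HB w; rewrite H1 // H2. Qed.
Lemma teq_App f (a b : 'I_(arity f) -> term S) :
  (forall k, teq (a k) (b k)) -> teq (App a) (App b).
Proof.
move=> H B HB w /=; congr (op f _).
by apply: functional_extensionality => k; apply: H.
Qed.
Lemma teq_subst sg s t : teq s t -> teq (subst sg s) (subst sg t).
Proof. by move=> H B HB w; rewrite !eval_subst H. Qed.

Definition canon (t : term S) : term S := epsilon (inhabits t) (fun s => teq s t).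

Lemma canon_teq t : teq (canon t) t.
Proof. by apply: (epsilon_spec (inhabits t) (fun s => teq s t)); exists t. Qed.

Lemma canon_eq s t : teq s t -> canon s = canon t.
Proof.
move=> H.
have E : (fun u => teq u s) = (fun u => teq u t).
  apply: functional_extensionality => u; apply: propositional_extensionality.
  by split=> K; [apply: teq_trans K H | apply: teq_trans K (teq_sym H)].
by rewrite /canon E; congr (epsilon _ _); apply: proof_irrelevance.
Qed.

Lemma canon_idem t : canon (canon t) = canon t.
Proof. exact: canon_eq (canon_teq t). Qed.

Definition free_carrier := {t : term S | canon t = t}.
Definition free_class (t : term S) : free_carrier := exist _ (canon t) (canon_idem t).
Definition free_op (f : S) (a : 'I_(arity f) -> free_carrier) : free_carrier :=
  free_class (App (fun k => proj1_sig (a k))).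
Definition free_algebra : algebra S := {| carrier := free_carrier; op := free_op |}.

Lemma free_val_inj (s s' : free_algebra) : proj1_sig s = proj1_sig s' -> s = s'.
Proof.
case: s => s hs; case: s' => s' hs' /= E; subst s'.
by congr exist; apply: proof_irrelevance.
Qed.

Lemma eval_free (v : nat -> free_algebra) t :
  proj1_sig (eval v t) = canon (subst (fun m => proj1_sig (v m)) t).
Proof.
elim: t => [m|f a IH] /=; first by rewrite (proj2_sig (v m)).
by apply: canon_eq; apply: teq_App => k; rewrite IH; apply: canon_teq.
Qed.

Lemma free_models : models Sigma free_algebra.
Proof.
move=> s t Hst v; apply: free_val_inj; rewrite !eval_free.
by apply: canon_eq => B HB w; rewrite !eval_subst; apply: HB.
Qed.

Lemma eval_free_class (B : algebra S) (HB : models Sigma B) (w : nat -> B) t :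
  eval w (proj1_sig (free_class t)) = eval w t.
Proof. exact: canon_teq. Qed.

Definition subst_kernel (sg : nat -> term S) (s s' : free_algebra) :=
  teq (subst sg (proj1_sig s)) (subst sg (proj1_sig s')).

Lemma subst_kernel_congruence sg : is_congruence (subst_kernel sg).
Proof.
split.
- by move=> x; apply: teq_refl.
- by move=> x y; apply: teq_sym.
- by move=> x y z; apply: teq_trans.
- move=> f a b H; rewrite /subst_kernel /=.
  apply: teq_trans; first exact: teq_subst (canon_teq _).
  apply: teq_trans; last exact: teq_sym (teq_subst _ (canon_teq _)).
  by apply: teq_App.
Qed.

Lemma subst_kernel_class sg s t :
  teq (subst sg s) (subst sg t) -> subst_kernel sg (free_class s) (free_class t).
Proof.
move=> H; rewrite /subst_kernel /=.
apply: teq_trans; first exact: teq_subst (canon_teq s).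
by apply: teq_trans H _; apply: teq_sym (teq_subst sg (canon_teq t)).
Qed.

End FreeAlgebra.

Definition vec4 (T : Type) (a b c d : T) (m : nat) : T :=
  match m with 0 => a | 1 => b | 2 => c | _ => d end.

Lemma vec4_app (T U : Type) (f1 f2 f3 f4 : T -> U) (x : T) :
  (fun m => vec4 f1 f2 f3 f4 m x) =1 vec4 (f1 x) (f2 x) (f3 x) (f4 x).
Proof. by case=> [|[|[|m]]]. Qed.

Section Shifting.
Variables (S : signature) (Sigma : term S -> term S -> Prop).
Hypothesis HCM : forall B : algebra S, models Sigma B -> con_modular B.

Notation F := (free_algebra Sigma).
Notation gen m := (free_class Sigma (Var S m)).

Definition day_term (t : term S) :=
  forall B : algebra S, models Sigma B -> forall a b : B, eval (vec4 a b b a) t = a.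

Lemma subst_kernel_vec4 p q r s (x y : F) :
  subst_kernel (vec4 (Var S p) (Var S q) (Var S r) (Var S s)) x y ->
  forall B : algebra S, models Sigma B -> forall w : nat -> B,
  eval (vec4 (w p) (w q) (w r) (w s)) (proj1_sig x) =
  eval (vec4 (w p) (w q) (w r) (w s)) (proj1_sig y).
Proof.
move=> H B HB w; have := H B HB w; rewrite !eval_subst.
by rewrite !(@eval_ext _ _ _ (vec4 (w p) (w q) (w r) (w s))) //; case=> [|[|[|m]]].
Qed.

Definition alpha := @subst_kernel S Sigma (vec4 (Var S 0) (Var S 0) (Var S 3) (Var S 3)).
Definition beta := @subst_kernel S Sigma (vec4 (Var S 0) (Var S 1) (Var S 1) (Var S 0)).
Definition gamma := @subst_kernel S Sigma (vec4 (Var S 0) (Var S 1) (Var S 1) (Var S 3)).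

Lemma gamma_le_beta : con_le gamma beta.
Proof.
move=> s s' H B HB w; rewrite !eval_subst.
have := subst_kernel_vec4 H HB (vec4 (w 0) (w 1) (w 2) (w 0)) => /=.
by rewrite !(@eval_ext _ _ _ (vec4 (w 0) (w 1) (w 1) (w 0))) //; case=> [|[|[|m]]].
Qed.

Lemma free_chain : union_chain gamma (con_meet alpha beta) (gen 0) (gen 3).
Proof.
have Hal := @subst_kernel_congruence S Sigma (vec4 (Var S 0) (Var S 0) (Var S 3) (Var S 3)).
have Hbe := @subst_kernel_congruence S Sigma (vec4 (Var S 0) (Var S 1) (Var S 1) (Var S 0)).
have Hga := @subst_kernel_congruence S Sigma (vec4 (Var S 0) (Var S 1) (Var S 1) (Var S 3)).
apply: join_union_chain; [exact: Hga | exact: meet_congruence Hal Hbe |].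
apply/(HCM (@free_models S Sigma) Hga Hal Hbe gamma_le_beta); split.
- move=> th Hth Hga_th Hal_th.
  apply: (cong_trans Hth (y := gen 1)); first by apply: Hal_th; apply: subst_kernel_class.
  apply: (cong_trans Hth (y := gen 2)); first by apply: Hga_th; apply: subst_kernel_class.
  by apply: Hal_th; apply: subst_kernel_class.
- exact: subst_kernel_class.
Qed.

Lemma beta_gen0_day (s : F) : beta s (gen 0) -> day_term (proj1_sig s).
Proof.
move=> H B HB a b.
by have /= -> := subst_kernel_vec4 H HB (vec4 a b b a); rewrite eval_free_class.
Qed.

Variables (A : algebra S) (HA : models Sigma A).
Variables (delta : A -> A -> Prop) (Hdelta : is_congruence delta).

Lemma day_shift (y x u v : A) : delta u x ->
  (forall t, day_term t -> delta (eval (vec4 y x u v) t) (eval (vec4 y y v v) t)) ->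
  delta y v.
Proof.
move=> Hux Key.
have Hbe := @subst_kernel_congruence S Sigma (vec4 (Var S 0) (Var S 1) (Var S 1) (Var S 0)).
(* e s is the value s(y,y,v,v); the chain from x0 to x3 goes from y to v. *)
pose e (s : F) := eval (vec4 y y v v) (proj1_sig s).
have shift_ux t : delta (eval (vec4 y x u v) t) (eval (vec4 y x x v) t).
  by apply: eval_cong => // -[|[|[|m]]] //=; apply: cong_refl.
have gamma_step s s' : gamma s s' -> day_term (proj1_sig s) ->
    day_term (proj1_sig s') -> delta (e s) (e s').
  move=> Hg Ds Ds'.
  have Eg := subst_kernel_vec4 Hg HA (vec4 y x x v); rewrite /= in Eg.
  apply: cong_trans (cong_sym Hdelta (Key _ Ds)) _ => //.
  apply: cong_trans (shift_ux _) _ => //; rewrite Eg.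
  exact: cong_trans (cong_sym Hdelta (shift_ux _)) (Key _ Ds').
(* Along the chain from x0 we stay in its beta-class and move by delta. *)
pose th s s' := beta s s' /\ (beta s (gen 0) -> delta (e s) (e s')).
have chain_th : con_le (union_chain gamma (con_meet alpha beta)) th.
  apply: union_chain_sub.
  - move=> s1 s2 s3 [b12 d12] [b23 d23]; split; first exact: cong_trans b12 b23.
    move=> b1; apply: cong_trans (d12 b1) (d23 _) => //.
    exact: cong_trans (cong_sym Hbe b12) b1.
  - move=> s s' Hg; have Hb := gamma_le_beta Hg; split => // b0.
    apply: gamma_step => //; apply: beta_gen0_day => //.
    exact: cong_trans (cong_sym Hbe Hb) b0.
  - move=> s s' [Ha Hb]; split => // _.
    rewrite /e (subst_kernel_vec4 Ha HA (vec4 y y v v)); exact: cong_refl.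
have [_ /(_ (cong_refl Hbe _))] := chain_th _ _ free_chain.
by rewrite /e !eval_free_class.
Qed.

End Shifting.

Section CubeUpdates.
Variable n : nat.
Implicit Types (p : {ffun 'I_n -> bool}) (i j : 'I_n).

Lemma upd_upd p i b c : upd (upd p i b) i c = upd p i c.
Proof. by apply/ffunP => k; rewrite !ffunE; case: eqP. Qed.

Lemma upd_comm p i j b c : i != j -> upd (upd p i b) j c = upd (upd p j c) i b.
Proof.
move=> ne; apply/ffunP => k; rewrite !ffunE.
case: (eqVneq k j) => [kj|kj]; case: (eqVneq k i) => [ki|ki] //.
by move: ne; rewrite -kj -ki eqxx.
Qed.

Lemma upd_id p i b : p i = b -> upd p i b = p.
Proof. by move=> e; apply/ffunP => k; rewrite !ffunE; case: eqP => // ->. Qed.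

Lemma upd_at p i b : upd p i b i = b.
Proof. by rewrite ffunE eqxx. Qed.

Lemma upd_ne p i k b : k != i -> upd p i b k = p k.
Proof. by move=> ne; rewrite ffunE (negbTE ne). Qed.

End CubeUpdates.

Section TermCubes.
Variables (S : signature) (A : algebra S) (n : nat) (R : cube A n -> Prop).
Hypothesis HR : tolerance R.

Definition term_cube (t : term S) (G : nat -> cube A n) : cube A n :=
  fun f => eval (fun m => G m f) t.

Lemma term_cube_in t G : (forall m, R (G m)) -> R (term_cube t G).
Proof.
move=> HG; elim: t => [m|f a IH] /=; first exact: HG.
exact: (HR.1 f _ IH).
Qed.

Lemma refl_in g i b : R g -> R (refl i b g).
Proof. by move=> Rg; case: (HR.2 g Rg i). Qed.

End TermCubes.

Section Transfer.
Variables (S : signature) (Sigma : term S -> term S -> Prop).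
Hypothesis HCM : forall B : algebra S, models Sigma B -> con_modular B.
Variables (A : algebra S) (HA : models Sigma A) (n : nat) (R : cube A n -> Prop).
Hypothesis HR : tolerance R.
Variables (delta : A -> A -> Prop) (Hdelta : is_congruence delta).
Variables (i j : 'I_n) (Hij : i != j) (g : cube A n).
Hypothesis Rg : R g.
Hypothesis Hj : forall f : {ffun 'I_n -> bool}, (exists k, k != j /\ f k = false) ->
  delta (g (upd f j false)) (g (upd f j true)).

Implicit Type p : {ffun 'I_n -> bool}.

Definition lo p := g (upd p i false).
Definition hi p := g (upd p i true).
Definition lo0 p := lo (upd p j false).
Definition hi0 p := hi (upd p j false).

Lemma lo0_lo p : p j = true -> delta (lo0 p) (lo p).
Proof.
move=> pj; have := @Hj (upd p i false); rewrite /lo0 /lo upd_comm //.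
rewrite (@upd_id _ (upd p i false) j true) ?upd_ne 1?eq_sym //; apply.
by exists i; rewrite upd_at.
Qed.

Lemma hi0_hi p k : p j = true -> k != i -> p k = false -> delta (hi0 p) (hi p).
Proof.
move=> pj ki pk; have := @Hj (upd p i true); rewrite /hi0 /hi upd_comm //.
rewrite (@upd_id _ (upd p i true) j true) ?upd_ne 1?eq_sym //; apply.
exists k; rewrite upd_ne //; split => //.
by apply/eqP => e; move: pk; rewrite e pj.
Qed.

Lemma lo0_hi0_flat p : p j = false -> lo0 p = lo p /\ hi0 p = hi p.
Proof. by move=> pj; rewrite /lo0 /hi0 upd_id. Qed.

Definition shift_cube t := term_cube t
  (vec4 (refl i true g) g (refl j false g) (refl i true (refl j false g))).

Lemma shift_cube_in t : R (shift_cube t).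
Proof.
by apply: term_cube_in => // -[|[|[|m]]] /=; do ?apply: refl_in.
Qed.

Lemma shift_cube_lo t p :
  shift_cube t (upd p i false) = eval (vec4 (hi p) (lo p) (lo0 p) (hi0 p)) t.
Proof.
apply: eval_ext => m; rewrite vec4_app; case: m => [|[|[|m]]];
  by rewrite /= /refl /hi /lo /lo0 /hi0 ?upd_upd // upd_comm.
Qed.

Lemma shift_cube_hi t p :
  shift_cube t (upd p i true) = eval (vec4 (hi p) (hi p) (hi0 p) (hi0 p)) t.
Proof.
apply: eval_ext => m; rewrite vec4_app; case: m => [|[|[|m]]];
  by rewrite /= /refl /hi /lo /lo0 /hi0 ?upd_upd // upd_comm.
Qed.

Lemma shift_cube_supporting t : day_term Sigma t ->
  forall f : {ffun 'I_n -> bool}, (exists k, k != i /\ f k = false) ->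
  delta (shift_cube t (upd f i false)) (shift_cube t (upd f i true)).
Proof.
move=> Dt f [k [ki fk]]; rewrite shift_cube_lo shift_cube_hi.
have Dt_A := Dt A HA; have Dt_const a : eval (vec4 a a a a) t = a := Dt_A a a.
case fj: (f j); last first.
  by case: (lo0_hi0_flat fj) => -> ->; rewrite Dt_A Dt_const; apply: cong_refl.
have Hv := hi0_hi fj ki fk.
apply: (cong_trans Hdelta (y := hi f)).
- rewrite -{2}(Dt_A (hi f) (lo f)); apply: eval_cong => // -[|[|[|m]]] /=;
    by [apply: cong_refl | apply: lo0_lo | apply: Hv].
- rewrite -{1}(Dt_const (hi f)); apply: eval_cong => // -[|[|[|m]]] /=;
    by [apply: cong_refl | apply: cong_sym Hv].
Qed.

Lemma pivot_from_centrality : centrality R delta i ->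
  delta (g (upd (one_fn n) j false)) (g (upd (one_fn n) j true)).
Proof.
move=> Ci; pose one := one_fn n.
have onej : one j = true by rewrite ffunE.
have -> : g (upd one j false) = hi0 one.
  by rewrite /hi0 /hi (@upd_id _ (upd one j false) i true) // upd_ne ?ffunE.
have -> : g (upd one j true) = hi one by rewrite /hi !upd_id ?ffunE.
apply: cong_sym => //; apply: (day_shift HCM HA Hdelta (lo0_lo onej)) => t Dt.
rewrite -shift_cube_lo -shift_cube_hi.
exact: Ci (shift_cube_in t) (shift_cube_supporting Dt).
Qed.

End Transfer.

Theorem proposition2p3 (S : signature) (Sigma : term S -> term S -> Prop)
  (HCM : forall B : algebra S, models Sigma B -> con_modular B)
  (A : algebra S) (HA : models Sigma A)
  (n : nat) (Hn : 2 <= n) (R : cube A n -> Prop) (HR : tolerance R)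
  (delta : A -> A -> Prop) (Hdelta : is_congruence delta) :
  (exists j : 'I_n, centrality R delta j) -> forall i : 'I_n, centrality R delta i.
Proof.
move=> [j Cj] i; case: (eqVneq j i) => [<- //|ne] g Rg Hi.
exact: (pivot_from_centrality HCM HA HR Hdelta ne Rg Hi Cj).
Qed.
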